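(* Let $(B,\sqsubseteq)$ be a $\mathsf{DCPO}_\bot$-ordered functor with a cofree comonad, $\Sigma$ a functor with a free monad, and $\rho\colon\Sigma B^\infty\Rightarrow B\Sigma^*$ a monotone biGSOS specification. For each coalgebra $c\colon X\to BX$, let $c^\sharp\colon\Sigma^*X\to B\Sigma^*X$ be the least fixed point of $\varphi_c$ (which exists, the function space being a pointed DCPO under the pointwise order and $\varphi_c$ being monotone). If $h\colon X\to Y$ is a coalgebra homomorphism from $c\colon X\to BX$ to $d\colon Y\to BY$, then $\Sigma^*h$ is a coalgebra homomorphism from $c^\sharp$ to $d^\sharp$. Consequently $\overline{\Sigma^*}(X,c)=(\Sigma^*X,c^\sharp)$, $\overline{\Sigma^*}(h)=\Sigma^*h$ defines a functor $\mathsf{Coalg}(B)\to\mathsf{Coalg}(B)$ lifting $\Sigma^*$ (i.e. commuting with the forgetful functor to $\mathsf{Set}$).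
   Context: An ordered functor $(B,\sqsubseteq)$ is a functor $B\colon\mathsf{Set}\to\mathsf{Set}$ together with a preorder $\sqsubseteq_{BX}$ on $BX$ for every set $X$, such that $Bf$ is monotone for every function $f$. It is $\mathsf{DCPO}_\bot$-ordered if moreover each $\sqsubseteq_{BX}$ is a partial order making $BX$ a pointed DCPO (least element and suprema of all directed subsets), and each $Bf$ is continuous, i.e. preserves suprema of all directed subsets including the empty one (hence preserves the least element). Relation lifting: for $R\subseteq X\times Y$ with projections $\pi_1,\pi_2$ and any functor $F$, $\mathsf{Rel}(F)(R)=\{(b,c)\in FX\times FY\mid\exists d\in FR.\ F\pi_1(d)=b,\ F\pi_2(d)=c\}$; $\mathsf{Rel}_{\sqsubseteq}(B)(R)=\{(b,c)\mid\exists b',c'.\ b\sqsubseteq b',\ (b',c')\in\mathsf{Rel}(B)(R),\ c'\sqsubseteq c\}$. For coalgebras $f\colon X\to BX$, $g\colon Y\to BY$, $R\subseteq X\times Y$ is a simulation if $(f(x),g(y))\in\mathsf{Rel}_{\sqsubseteq}(B)(R)$ for all $(x,y)\in R$; similarity is the greatest simulation. A coalgebra homomorphism from $c\colon X\to BX$ to $d\colon Y\to BY$ is $h\colon X\to Y$ with $Bh\circ c=d\circ h$; $\mathsf{Coalg}(B)$ is the category of $B$-coalgebras and homomorphisms. Cofree comonad: for each set $X$, $\theta_X\colon B^\infty X\to BB^\infty X$, $\epsilon_X\colon B^\infty X\to X$ with $\langle\theta_X,\epsilon_X\rangle$ a final $B(-)\times X$-coalgebra; for $f\colon X\to BX$,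 $f^\infty\colon X\to B^\infty X$ is the unique coalgebra morphism from $\langle f,\mathrm{id}_X\rangle$ to $\langle\theta_X,\epsilon_X\rangle$. The functor $B(-)\times X$ is ordered by $(b,x)\,\widetilde\sqsubseteq\,(c,y)$ iff $b\sqsubseteq c$ and $x=y$; $\lesssim_{B^\infty X}$ is the similarity of $\langle\theta_X,\epsilon_X\rangle$ with itself w.r.t. this order. Free monad: for each set $X$, $\iota_X\colon\Sigma\Sigma^*X\to\Sigma^*X$, $\eta_X\colon X\to\Sigma^*X$ with $[\iota_X,\eta_X]$ an initial algebra for $\Sigma(-)+X$; $\mu_X\colon\Sigma^*\Sigma^*X\to\Sigma^*X$ is the unique map with $\mu_X\circ\eta_{\Sigma^*X}=\mathrm{id}$ and $\mu_X\circ\iota_{\Sigma^*X}=\iota_X\circ\Sigma\mu_X$. A biGSOS specification is a natural transformation $\rho\colon\Sigma B^\infty\Rightarrow B\Sigma^*$; it is monotone if for every set $X$ and all $u,v\in\Sigma B^\infty X$ with $(u,v)\in\mathsf{Rel}(\Sigma)(\lesssim_{B^\infty X})$, $\rho_X(u)\sqsubseteq_{B\Sigma^*X}\rho_X(v)$. For $c\colon X\to BX$, $\varphi_c(f)=[\,B\mu_X\circ\rho_{\Sigma^*X}\circ\Sigma f^\infty,\ B\eta_X\circ c\,]\circ[\iota_X,\eta_X]^{-1}$ for $f\colon\Sigma^*X\to B\Sigma^*X$. *)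

From Stdlib Require Import Relations.

Record Functor := {
  F0 :> Type -> Type;
  fmap : forall A B : Type, (A -> B) -> F0 A -> F0 B;
  fmap_id : forall A (x : F0 A), fmap A A (fun a => a) x = x;
  fmap_comp : forall A B C (f : A -> B) (g : B -> C) (x : F0 A),
      fmap A C (fun a => g (f a)) x = fmap B C g (fmap A B f x)
}.
Arguments fmap f0 {A B}.

Definition preorder_on {A} (le : A -> A -> Prop) : Prop :=
  (forall x, le x x) /\ (forall x y z, le x y -> le y z -> le x z).

(* directed subsets; the empty subset counts as directed *)
Definition directed {A} (le : A -> A -> Prop) (D : A -> Prop) : Prop :=
  forall x y, D x -> D y -> exists z, D z /\ le x z /\ le y z.

Definition is_sup {A} (le : A -> A -> Prop) (D : A -> Prop) (s : A) : Prop :=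
  (forall x, D x -> le x s) /\ (forall u, (forall x, D x -> le x u) -> le s u).

Definition pointed_dcpo {A} (le : A -> A -> Prop) : Prop :=
  preorder_on le /\ (forall x y, le x y -> le y x -> x = y) /\
  (exists bot, forall x, le bot x) /\
  (forall D, directed le D -> exists s, is_sup le D s).

Definition ordered_functor (B : Functor) (le : forall X, B X -> B X -> Prop) : Prop :=
  (forall X, preorder_on (le X)) /\
  (forall X Y (f : X -> Y) b b', le X b b' -> le Y (fmap B f b) (fmap B f b')).

(** DCPO_bot-ordered functor: each B f continuous (preserves all directed sups,
    including the empty one). *)
Definition DCPObot_ordered (B : Functor) (le : forall X, B X -> B X -> Prop) : Prop :=
  ordered_functor B le /\
  (forall X, pointed_dcpo (le X)) /\
  (forall X Y (f : X -> Y) (D : B X -> Prop) s,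
      directed (le X) D -> is_sup (le X) D s ->
      is_sup (le Y) (fun y => exists x, D x /\ y = fmap B f x) (fmap B f s)).

Definition RelLift {F : Type -> Type} (fm : forall A B : Type, (A -> B) -> F A -> F B)
  {X Y : Type} (R : X -> Y -> Prop) (b : F X) (c : F Y) : Prop :=
  exists d : F {p : X * Y | R (fst p) (snd p)},
    fm _ _ (fun p => fst (proj1_sig p)) d = b /\
    fm _ _ (fun p => snd (proj1_sig p)) d = c.

Definition RelLiftOrd {F : Type -> Type} (fm : forall A B : Type, (A -> B) -> F A -> F B)
  (le : forall X, F X -> F X -> Prop)
  {X Y : Type} (R : X -> Y -> Prop) (b : F X) (c : F Y) : Prop :=
  exists b' c', le X b b' /\ RelLift fm R b' c' /\ le Y c' c.

Definition simulation {F : Type -> Type} (fm : forall A B : Type, (A -> B) -> F A -> F B)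
  (le : forall X, F X -> F X -> Prop)
  {X Y : Type} (f : X -> F X) (g : Y -> F Y) (R : X -> Y -> Prop) : Prop :=
  forall x y, R x y -> RelLiftOrd fm le R (f x) (g y).

Definition similarity {F : Type -> Type} (fm : forall A B : Type, (A -> B) -> F A -> F B)
  (le : forall X, F X -> F X -> Prop)
  {X Y : Type} (f : X -> F X) (g : Y -> F Y) (x : X) (y : Y) : Prop :=
  exists R, simulation fm le f g R /\ R x y.

(** ** Cofree comonad: final B(-) x X coalgebras, given with their unfolds *)
Record CofreeComonad (B : Functor) := {
  Binf : Type -> Type;
  theta : forall X, Binf X -> B (Binf X);
  eps : forall X, Binf X -> X;
  unfold : forall X (Z : Type), (Z -> B Z) -> (Z -> X) -> Z -> Binf X;
  unfold_theta : forall X Z g e z,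
      theta X (unfold X Z g e z) = fmap B (unfold X Z g e) (g z);
  unfold_eps : forall X Z g e z, eps X (unfold X Z g e z) = e z;
  unfold_unique : forall X Z g e (m : Z -> Binf X),
      (forall z, theta X (m z) = fmap B m (g z)) ->
      (forall z, eps X (m z) = e z) ->
      forall z, m z = unfold X Z g e z
}.
Arguments Binf {B} c X.
Arguments theta {B} c {X}.
Arguments eps {B} c {X}.
Arguments unfold {B} c {X Z}.

Definition cof_ext {B : Functor} (CF : CofreeComonad B) {X} (f : X -> B X) : X -> Binf CF X :=
  unfold CF f (fun x => x).

Definition Binf_map {B : Functor} (CF : CofreeComonad B) {X Y} (g : X -> Y) : Binf CF X -> Binf CF Y :=
  unfold CF (@theta B CF X) (fun z => g (eps CF z)).

Definition BxX (B : Functor) (X : Type) : Type -> Type := fun Z => (B Z * X)%type.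
Definition BxX_map (B : Functor) (X : Type) : forall A C : Type, (A -> C) -> BxX B X A -> BxX B X C :=
  fun A C f p => (fmap B f (fst p), snd p).
Definition BxX_le {B : Functor} (le : forall Z, B Z -> B Z -> Prop) (X : Type)
  : forall Z, BxX B X Z -> BxX B X Z -> Prop :=
  fun Z p q => le Z (fst p) (fst q) /\ snd p = snd q.

Definition Binf_sim {B : Functor} (le : forall Z, B Z -> B Z -> Prop) (CF : CofreeComonad B) (X : Type)
  : Binf CF X -> Binf CF X -> Prop :=
  similarity (BxX_map B X) (BxX_le le X)
    (fun z => (theta CF z, eps CF z)) (fun z => (theta CF z, eps CF z)).

(** ** Free monad: initial Sigma(-) + X algebras, given with their folds *)
Record FreeMonad (S : Functor) := {
  Sstar : Type -> Type;
  iota : forall X, S (Sstar X) -> Sstar X;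
  eta : forall X, X -> Sstar X;
  fold : forall X (Z : Type), (S Z -> Z) -> (X -> Z) -> Sstar X -> Z;
  fold_iota : forall X Z a b t,
      fold X Z a b (iota X t) = a (fmap S (fold X Z a b) t);
  fold_eta : forall X Z a b x, fold X Z a b (eta X x) = b x;
  fold_unique : forall X Z a b (m : Sstar X -> Z),
      (forall t, m (iota X t) = a (fmap S m t)) ->
      (forall x, m (eta X x) = b x) ->
      forall s, m s = fold X Z a b s
}.
Arguments Sstar {S} f X.
Arguments iota {S} f {X}.
Arguments eta {S} f {X}.
Arguments fold {S} f {X Z}.

Definition Sstar_map {S : Functor} (FM : FreeMonad S) {X Y} (h : X -> Y) : Sstar FM X -> Sstar FM Y :=
  fold FM (@iota S FM Y) (fun x => eta FM (h x)).

Definition mu {S : Functor} (FM : FreeMonad S) (X : Type) : Sstar FM (Sstar FM X) -> Sstar FM X :=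
  fold FM (@iota S FM X) (fun s => s).

(* [iota_X, eta_X]^{-1} (Lambek) *)
Definition destr {S : Functor} (FM : FreeMonad S) (X : Type) : Sstar FM X -> (S (Sstar FM X) + X)%type :=
  fold FM (fun t => inl (fmap S (fun z => match z with
                                           | inl u => iota FM u
                                           | inr x => eta FM x end) t))
          (fun x => inr x).

Definition natural_biGSOS {B S : Functor} (CF : CofreeComonad B) (FM : FreeMonad S)
  (rho : forall X, S (Binf CF X) -> B (Sstar FM X)) : Prop :=
  forall X Y (g : X -> Y) (u : S (Binf CF X)),
    rho Y (fmap S (Binf_map CF g) u) = fmap B (Sstar_map FM g) (rho X u).

Definition monotone_biGSOS {B S : Functor} (le : forall Z, B Z -> B Z -> Prop)
  (CF : CofreeComonad B) (FM : FreeMonad S)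
  (rho : forall X, S (Binf CF X) -> B (Sstar FM X)) : Prop :=
  forall X (u v : S (Binf CF X)),
    RelLift (@fmap S) (Binf_sim le CF X) u v -> le (Sstar FM X) (rho X u) (rho X v).

Definition phi {B S : Functor} (CF : CofreeComonad B) (FM : FreeMonad S)
  (rho : forall X, S (Binf CF X) -> B (Sstar FM X)) {X} (c : X -> B X)
  (f : Sstar FM X -> B (Sstar FM X)) : Sstar FM X -> B (Sstar FM X) :=
  fun s => match destr FM X s with
           | inl t => fmap B (mu FM X) (rho (Sstar FM X) (fmap S (cof_ext CF f) t))
           | inr x => fmap B (eta FM) (c x)
           end.

Definition is_lfp {A C} (le : C -> C -> Prop) (F : (A -> C) -> (A -> C)) (f : A -> C) : Prop :=
  (forall a, f a = F f a) /\
  (forall g, (forall a, g a = F g a) -> forall a, le (f a) (g a)).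

Definition coalg_hom {B : Functor} {X Y} (c : X -> B X) (d : Y -> B Y) (h : X -> Y) : Prop :=
  forall x, fmap B h (c x) = d (h x).

From Stdlib Require Import ClassicalEpsilon FunctionalExtensionality.

(* The least fixed point of phi_c exists by Pataraia's theorem: a monotone map on
   a pointed DCPO has a least prefixed point, and the construction can be
   relativised to any predicate closed under the map and under directed sups.
   phi_c is monotone because rho is: if f <= g pointwise, then f^oo z and g^oo z
   are similar.  For the homomorphism property, run the relativised theorem for
   phi_c x phi_d on pairs of functions with the predicate
   "B Sigma^* h o f = g o Sigma^* h".  It is preserved by phi_c x phi_d by
   naturality of rho and mu, and it is closed under directed sups because these
   are computed pointwise and B Sigma^* h is continuous.  The least fixed point
   of the product is (c^#, d^#). *)

Definition image {A C} (f : A -> C) (D : A -> Prop) : C -> Prop :=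
  fun y => exists x, D x /\ y = f x.

Definition pointwise_le {A C} (le : C -> C -> Prop) (f g : A -> C) : Prop :=
  forall a, le (f a) (g a).

Definition pair_le {A1 A2} (le1 : A1 -> A1 -> Prop) (le2 : A2 -> A2 -> Prop)
  (p q : A1 * A2) : Prop :=
  le1 (fst p) (fst q) /\ le2 (snd p) (snd q).

Section Pataraia.

Variables (A : Type) (le : A -> A -> Prop) (F : A -> A) (P : A -> Prop).
Hypotheses (le_refl : forall x, le x x)
  (le_trans : forall x y z, le x y -> le y z -> le x z)
  (F_mono : forall x y, le x y -> le (F x) (F y))
  (P_F : forall x, P x -> P (F x))
  (P_sup : forall D, directed le D -> (forall x, D x -> P x) ->
           exists s, is_sup le D s /\ P s).

Definition admissible (x : A) : Prop :=
  P x /\ le x (F x) /\ forall p, le (F p) p -> le x p.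

Lemma admissible_sup D s :
  (forall x, D x -> admissible x) -> is_sup le D s -> P s -> admissible s.
Proof.
  intros HD [s_ub s_least] Ps. split; [exact Ps | split].
  - apply s_least. intros x Dx. destruct (HD x Dx) as [_ [x_post _]].
    apply le_trans with (F x); [exact x_post | apply F_mono, s_ub, Dx].
  - intros p Fp. apply s_least. intros x Dx. apply (HD x Dx), Fp.
Qed.

Lemma admissible_F x : admissible x -> admissible (F x).
Proof.
  intros [Px [x_post x_below]]. split; [auto | split].
  - apply F_mono, x_post.
  - intros p Fp. apply le_trans with (F p); auto.
Qed.

Definition progressive (g : A -> A) : Prop :=
  (forall x, admissible x -> admissible (g x)) /\
  (forall x, admissible x -> le x (g x)) /\
  (forall x y, admissible x -> admissible y -> le x y -> le (g x) (g y)).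

Lemma progressive_id : progressive (fun x => x).
Proof. split; [| split]; auto. Qed.

Lemma progressive_comp g1 g2 :
  progressive g1 -> progressive g2 -> progressive (fun x => g1 (g2 x)).
Proof.
  intros [g1_adm [g1_infl g1_mono]] [g2_adm [g2_infl g2_mono]].
  split; [| split]; intros x.
  - auto.
  - intros Ax. apply le_trans with (g2 x); auto.
  - intros y Ax Ay Hxy. auto.
Qed.

Definition orbit (x : A) : A -> Prop := fun y => exists g, progressive g /\ y = g x.

Lemma orbit_directed x : admissible x -> directed le (orbit x).
Proof.
  intros Ax y1 y2 [g1 [G1 ->]] [g2 [G2 ->]].
  exists (g1 (g2 x)). split.
  - exists (fun z => g1 (g2 z)). split; [apply progressive_comp |]; auto.
  - destruct G1 as [g1_adm [g1_infl g1_mono]], G2 as [g2_adm [g2_infl _]].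
    split; [apply g1_mono | apply g1_infl]; auto.
Qed.

Lemma orbit_sup_exists :
  exists t, forall x, admissible x -> is_sup le (orbit x) (t x) /\ P (t x).
Proof.
  apply (choice (fun x s => admissible x -> is_sup le (orbit x) s /\ P s)).
  intro x. destruct (classic (admissible x)) as [Ax | nAx].
  - destruct (P_sup (orbit x) (orbit_directed x Ax)) as [s Hs].
    + intros y [g [[g_adm _] ->]]. apply (g_adm x Ax).
    + exists s. auto.
  - exists x. tauto.
Qed.

Section OrbitSup.

Variable t : A -> A.
Hypothesis t_sup : forall x, admissible x -> is_sup le (orbit x) (t x) /\ P (t x).

Lemma admissible_orbit_sup x : admissible x -> admissible (t x).
Proof.
  intros Ax. destruct (t_sup x Ax) as [Hs Ps]. apply (admissible_sup (orbit x)); auto.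
  intros y [g [[g_adm _] ->]]. auto.
Qed.

Lemma progressive_F_orbit_sup : progressive (fun x => F (t x)).
Proof.
  split; [| split].
  - intros x Ax. apply admissible_F, admissible_orbit_sup, Ax.
  - intros x Ax. apply le_trans with (t x).
    + apply (t_sup x Ax). exists (fun z => z). split; [exact progressive_id | reflexivity].
    + destruct (admissible_orbit_sup x Ax) as [_ [t_post _]]. exact t_post.
  - intros x y Ax Ay Hxy. apply F_mono, (t_sup x Ax).
    intros z [g [G ->]]. apply le_trans with (g y).
    + apply G; auto.
    + apply (t_sup y Ay). exists g. auto.
Qed.

End OrbitSup.

Lemma exists_least_prefixed_point :
  exists s, P s /\ le s (F s) /\ le (F s) s /\ forall p, le (F p) p -> le s p.
Proof.
  destruct orbit_sup_exists as [t t_sup].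
  destruct (P_sup (fun _ => False)) as [b [[_ b_least] Pb]];
    [intros ? ? [] | intros ? [] |].
  assert (Ab : admissible b).
  { split; [exact Pb | split]; intros; apply b_least; contradiction. }
  destruct (admissible_orbit_sup t t_sup b Ab) as [Ps [s_post s_below]].
  exists (t b). repeat split; auto.
  apply (t_sup b Ab). exists (fun x => F (t x)).
  split; [apply progressive_F_orbit_sup, t_sup | reflexivity].
Qed.

End Pataraia.

Section PointedDcpo.

Variables (C : Type) (le : C -> C -> Prop).
Hypothesis hC : pointed_dcpo le.

Lemma dcpo_refl x : le x x.
Proof. exact (proj1 (proj1 hC) x). Qed.

Lemma dcpo_trans x y z : le x y -> le y z -> le x z.
Proof. exact (proj2 (proj1 hC) x y z). Qed.

Lemma dcpo_antisym x y : le x y -> le y x -> x = y.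
Proof. exact (proj1 (proj2 hC) x y). Qed.

Lemma is_sup_unique D s s' : is_sup le D s -> is_sup le D s' -> s = s'.
Proof.
  intros [s_ub s_least] [s'_ub s'_least].
  apply dcpo_antisym; [apply s_least, s'_ub | apply s'_least, s_ub].
Qed.

Lemma pointwise_sup_exists {A} (D : (A -> C) -> Prop) :
  directed (pointwise_le le) D ->
  exists T : A -> C, forall a, is_sup le (image (fun f => f a) D) (T a).
Proof.
  intros HD. apply (choice (fun a s => is_sup le (image (fun f => f a) D) s)).
  intro a. apply (proj2 (proj2 (proj2 hC))).
  intros y1 y2 [f1 [D1 ->]] [f2 [D2 ->]].
  destruct (HD f1 f2 D1 D2) as [g [Dg [H1 H2]]].
  exists (g a). split; [exists g; auto | auto].
Qed.

End PointedDcpo.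

Lemma is_sup_ext {C} (le : C -> C -> Prop) (D D' : C -> Prop) s :
  (forall y, D y <-> D' y) -> is_sup le D s -> is_sup le D' s.
Proof.
  intros E [s_ub s_least]. split.
  - intros x Hx. apply s_ub, E, Hx.
  - intros u Hu. apply s_least. intros x Hx. apply Hu, E, Hx.
Qed.

Lemma directed_image {A C} (le : A -> A -> Prop) (le' : C -> C -> Prop) (f : A -> C) D :
  (forall x y, le x y -> le' (f x) (f y)) -> directed le D -> directed le' (image f D).
Proof.
  intros f_mono HD y1 y2 [x1 [D1 ->]] [x2 [D2 ->]].
  destruct (HD x1 x2 D1 D2) as [z [Dz [H1 H2]]].
  exists (f z). split; [exists z; auto | auto].
Qed.

Lemma is_sup_pointwise {A C} (le : C -> C -> Prop) (D : (A -> C) -> Prop) T :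
  (forall a, is_sup le (image (fun f => f a) D) (T a)) -> is_sup (pointwise_le le) D T.
Proof.
  intros HT. split.
  - intros f Df a. apply (proj1 (HT a)). exists f; auto.
  - intros u Hu a. apply (proj2 (HT a)). intros y [f [Df ->]]. apply Hu, Df.
Qed.

Lemma is_sup_pair {A1 A2} (le1 : A1 -> A1 -> Prop) (le2 : A2 -> A2 -> Prop) D s1 s2 :
  is_sup le1 (image fst D) s1 -> is_sup le2 (image snd D) s2 ->
  is_sup (pair_le le1 le2) D (s1, s2).
Proof.
  intros [ub1 least1] [ub2 least2]. split.
  - intros p Dp. split; [apply ub1 | apply ub2]; exists p; auto.
  - intros u Hu. split; [apply least1 | apply least2];
      intros y [p [Dp ->]]; apply Hu, Dp.
Qed.

Lemma is_lfp_exists {A C} (le : C -> C -> Prop) (hC : pointed_dcpo le)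
  (F : (A -> C) -> (A -> C)) :
  (forall f g, pointwise_le le f g -> pointwise_le le (F f) (F g)) ->
  exists f, is_lfp le F f.
Proof.
  intros F_mono.
  destruct (exists_least_prefixed_point (A -> C) (pointwise_le le) F (fun _ => True))
    as [f [_ [f_post [f_pre f_least]]]]; auto.
  - intros f a. apply dcpo_refl, hC.
  - intros f g h H1 H2 a. apply (dcpo_trans _ _ hC) with (g a); auto.
  - intros D HD _. destruct (pointwise_sup_exists _ _ hC D HD) as [T HT].
    exists T. split; [apply is_sup_pointwise, HT | exact I].
  - exists f. split.
    + intro a. apply (dcpo_antisym _ _ hC); auto.
    + intros g g_fix. apply f_least. intro a. rewrite <- g_fix. apply dcpo_refl, hC.
Qed.

Section LfpTransfer.

Variables (A1 A2 C1 C2 : Type) (le1 : C1 -> C1 -> Prop) (le2 : C2 -> C2 -> Prop).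
Hypotheses (hC1 : pointed_dcpo le1) (hC2 : pointed_dcpo le2).
Variables (k : C1 -> C2) (m : A1 -> A2).
Hypothesis k_cont :
  forall D s, directed le1 D -> is_sup le1 D s -> is_sup le2 (image k D) (k s).
Variables (F1 : (A1 -> C1) -> A1 -> C1) (F2 : (A2 -> C2) -> A2 -> C2).
Hypotheses
  (F1_mono : forall f g, pointwise_le le1 f g -> pointwise_le le1 (F1 f) (F1 g))
  (F2_mono : forall f g, pointwise_le le2 f g -> pointwise_le le2 (F2 f) (F2 g))
  (F_transfer : forall f g, (forall a, k (f a) = g (m a)) ->
                forall a, k (F1 f a) = F2 g (m a)).

Local Notation pair_order := (pair_le (pointwise_le le1) (pointwise_le le2)).

Definition transfers (p : (A1 -> C1) * (A2 -> C2)) : Prop :=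
  forall a, k (fst p a) = snd p (m a).

Lemma transfers_sup D :
  directed pair_order D -> (forall p, D p -> transfers p) ->
  exists s, is_sup pair_order D s /\ transfers s.
Proof.
  intros HD HP.
  assert (HD1 : directed (pointwise_le le1) (image fst D)).
  { apply directed_image with (le := pair_order); [intros ? ? []; auto | exact HD]. }
  assert (HD2 : directed (pointwise_le le2) (image snd D)).
  { apply directed_image with (le := pair_order); [intros ? ? []; auto | exact HD]. }
  destruct (pointwise_sup_exists _ _ hC1 _ HD1) as [T1 HT1].
  destruct (pointwise_sup_exists _ _ hC2 _ HD2) as [T2 HT2].
  exists (T1, T2). split; [apply is_sup_pair; apply is_sup_pointwise; assumption |].
  intro a. simpl.
  apply (is_sup_unique _ _ hC2 (image k (image (fun f => f a) (image fst D)))).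
  - apply k_cont; [| apply HT1].
    apply directed_image with (le := pointwise_le le1); [intros f g H; apply H | exact HD1].
  - refine (is_sup_ext _ _ _ _ _ (HT2 (m a))). intro y. split.
    + intros [f [[p [Dp ->]] ->]]. exists (fst p a). split.
      * exists (fst p). split; [exists p; auto | reflexivity].
      * symmetry. apply HP, Dp.
    + intros [x [[f [[p [Dp ->]] ->]] ->]]. exists (snd p).
      split; [exists p; auto | apply HP, Dp].
Qed.

(* Fixed-point induction for [F1 x F2] with the invariant [transfers]. *)
Lemma lfp_transfer f1 f2 :
  is_lfp le1 F1 f1 -> is_lfp le2 F2 f2 -> forall a, k (f1 a) = f2 (m a).
Proof.
  intros [f1_fix f1_least] [f2_fix f2_least].
  destruct (exists_least_prefixed_point _ pair_order (fun p => (F1 (fst p), F2 (snd p)))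
              transfers)
    as [u [u_transfers [[u1_post u2_post] [[u1_pre u2_pre] u_least]]]].
  - intro p. split; intro a; apply dcpo_refl; assumption.
  - intros p q r [H1 H2] [H3 H4].
    split; intro a;
      [apply (dcpo_trans _ _ hC1) with (fst q a) | apply (dcpo_trans _ _ hC2) with (snd q a)];
      auto.
  - intros p q [H1 H2]. split; simpl; auto.
  - intros p Hp. exact (F_transfer _ _ Hp).
  - exact transfers_sup.
  - destruct (u_least (f1, f2)) as [u1_below u2_below].
    { split; intro a; simpl; [rewrite <- f1_fix | rewrite <- f2_fix];
        apply dcpo_refl; assumption. }
    assert (E1 : forall a, f1 a = fst u a).
    { intro a. apply (dcpo_antisym _ _ hC1); [| apply u1_below].
      apply f1_least. intro b. apply (dcpo_antisym _ _ hC1); [apply u1_post | apply u1_pre]. }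
    assert (E2 : forall a, f2 a = snd u a).
    { intro a. apply (dcpo_antisym _ _ hC2); [| apply u2_below].
      apply f2_least. intro b. apply (dcpo_antisym _ _ hC2); [apply u2_post | apply u2_pre]. }
    intro a. rewrite E1, E2. apply u_transfers.
Qed.

End LfpTransfer.

Section FreeMonadFacts.

Variables (S : Functor) (FM : FreeMonad S).

Lemma Sstar_alg_hom_eq X Z (a : S Z -> Z) (b : X -> Z) (m1 m2 : Sstar FM X -> Z) :
  (forall t, m1 (iota FM t) = a (fmap S m1 t)) -> (forall x, m1 (eta FM x) = b x) ->
  (forall t, m2 (iota FM t) = a (fmap S m2 t)) -> (forall x, m2 (eta FM x) = b x) ->
  forall s, m1 s = m2 s.
Proof.
  intros H1i H1e H2i H2e s.
  rewrite (fold_unique S FM X Z a b m1), (fold_unique S FM X Z a b m2); auto.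
Qed.

Lemma Sstar_map_iota X Y (h : X -> Y) t :
  Sstar_map FM h (iota FM t) = iota FM (fmap S (Sstar_map FM h) t).
Proof. apply fold_iota. Qed.

Lemma Sstar_map_eta X Y (h : X -> Y) x : Sstar_map FM h (eta FM x) = eta FM (h x).
Proof. apply fold_eta. Qed.

Lemma Sstar_map_id X (s : Sstar FM X) : Sstar_map FM (fun x : X => x) s = s.
Proof.
  apply (Sstar_alg_hom_eq _ _ (@iota S FM X) (eta FM)
           (Sstar_map FM (fun x => x)) (fun s => s)).
  - apply Sstar_map_iota.
  - apply Sstar_map_eta.
  - intro t. rewrite fmap_id. reflexivity.
  - reflexivity.
Qed.

Lemma Sstar_map_comp X Y Z (f : X -> Y) (g : Y -> Z) s :
  Sstar_map FM (fun x => g (f x)) s = Sstar_map FM g (Sstar_map FM f s).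
Proof.
  apply (Sstar_alg_hom_eq _ _ (@iota S FM Z) (fun x => eta FM (g (f x)))
           (Sstar_map FM (fun x => g (f x))) (fun s => Sstar_map FM g (Sstar_map FM f s))).
  - apply Sstar_map_iota.
  - apply Sstar_map_eta.
  - intro t. rewrite !Sstar_map_iota, <- fmap_comp. reflexivity.
  - intro x. rewrite !Sstar_map_eta. reflexivity.
Qed.

Lemma Sstar_map_mu X Y (h : X -> Y) s :
  Sstar_map FM h (mu FM X s) = mu FM Y (Sstar_map FM (Sstar_map FM h) s).
Proof.
  apply (Sstar_alg_hom_eq _ _ (@iota S FM Y) (Sstar_map FM h)
           (fun s => Sstar_map FM h (mu FM X s))
           (fun s => mu FM Y (Sstar_map FM (Sstar_map FM h) s))).
  - intro t. unfold mu at 1. rewrite fold_iota, Sstar_map_iota, <- fmap_comp.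
    reflexivity.
  - intro x. unfold mu. rewrite fold_eta. reflexivity.
  - intro t. rewrite Sstar_map_iota. unfold mu at 1. rewrite fold_iota, <- fmap_comp.
    reflexivity.
  - intro x. rewrite Sstar_map_eta. unfold mu. apply fold_eta.
Qed.

Definition undestr {X} (u : S (Sstar FM X) + X) : Sstar FM X :=
  match u with inl t => iota FM t | inr x => eta FM x end.

Lemma undestrK X (s : Sstar FM X) : undestr (destr FM X s) = s.
Proof.
  apply (Sstar_alg_hom_eq _ _ (@iota S FM X) (eta FM)
           (fun s => undestr (destr FM X s)) (fun s => s)).
  - intro t. unfold destr at 1. rewrite fold_iota, <- fmap_comp. reflexivity.
  - intro x. unfold destr. rewrite fold_eta. reflexivity.
  - intro t. rewrite fmap_id. reflexivity.
  - reflexivity.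
Qed.

Lemma destr_iota X t : destr FM X (iota FM t) = inl t.
Proof.
  unfold destr at 1. rewrite fold_iota, <- fmap_comp. f_equal.
  rewrite <- (fmap_id S _ t) at 2. f_equal.
  apply functional_extensionality, undestrK.
Qed.

Lemma destr_eta X x : destr FM X (eta FM x) = inr x.
Proof. apply fold_eta. Qed.

End FreeMonadFacts.

Lemma Binf_map_cof_ext {B : Functor} (CF : CofreeComonad B) Z W
  (f : Z -> B Z) (f' : W -> B W) (g : Z -> W) :
  coalg_hom f f' g -> forall z, Binf_map CF g (cof_ext CF f z) = cof_ext CF f' (g z).
Proof.
  intros g_hom z.
  rewrite (unfold_unique B CF W Z f g (fun z => Binf_map CF g (cof_ext CF f z))),
          (unfold_unique B CF W Z f g (fun z => cof_ext CF f' (g z))); auto.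
  - intro w. unfold cof_ext at 1. rewrite unfold_theta, <- g_hom, <- fmap_comp. reflexivity.
  - intro w. apply unfold_eps.
  - intro w. unfold Binf_map at 1, cof_ext at 1.
    rewrite unfold_theta, unfold_theta, <- fmap_comp. reflexivity.
  - intro w. unfold Binf_map, cof_ext. rewrite !unfold_eps. reflexivity.
Qed.

(* The relation {(f^oo z, g^oo z)} is a simulation, whose witness in the
   relation lifting is B applied to the pairing z |-> (f^oo z, g^oo z). *)
Lemma cof_ext_sim (B : Functor) (le : forall X, B X -> B X -> Prop)
  (hB : ordered_functor B le) (CF : CofreeComonad B) Z (f g : Z -> B Z) :
  pointwise_le (le Z) f g ->
  forall z, Binf_sim le CF Z (cof_ext CF f z) (cof_ext CF g z).
Proof.
  destruct hB as [hpre hfm]. intros Hfg z.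
  set (R := fun a b => exists z, a = cof_ext CF f z /\ b = cof_ext CF g z).
  exists R. split; [| exists z; auto].
  intros a b [w [-> ->]].
  exists (fmap B (cof_ext CF f) (g w), w),
         (theta CF (cof_ext CF g w), eps CF (cof_ext CF g w)).
  assert (theta_cof_ext : forall h : Z -> B Z,
             theta CF (cof_ext CF h w) = fmap B (cof_ext CF h) (h w))
    by (intro; apply unfold_theta).
  assert (eps_cof_ext : forall h : Z -> B Z, eps CF (cof_ext CF h w) = w)
    by (intro; apply unfold_eps).
  rewrite !theta_cof_ext, !eps_cof_ext. split; [| split].
  - split; [apply hfm, Hfg | reflexivity].
  - exists (fmap B (fun v => exist (fun p => R (fst p) (snd p))
              (cof_ext CF f v, cof_ext CF g v) (ex_intro _ v (conj eq_refl eq_refl))) (g w), w).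
    unfold BxX_map. simpl. rewrite <- !fmap_comp. split; reflexivity.
  - split; [apply (proj1 (hpre _)) | reflexivity].
Qed.

Section Phi.

Variables (B : Functor) (le : forall X, B X -> B X -> Prop) (CF : CofreeComonad B)
  (S : Functor) (FM : FreeMonad S) (rho : forall X, S (Binf CF X) -> B (Sstar FM X)).

Lemma phi_monotone :
  ordered_functor B le -> monotone_biGSOS le CF FM rho ->
  forall X (c : X -> B X) f g, pointwise_le (le _) f g ->
  pointwise_le (le _) (phi CF FM rho c f) (phi CF FM rho c g).
Proof.
  intros hB hmono X c f g Hfg s. pose proof hB as [hpre hfm].
  unfold phi. destruct (destr FM X s) as [t | x].
  - apply hfm, hmono.
    exists (fmap S (fun z => exist (fun p => Binf_sim le CF _ (fst p) (snd p))
              (cof_ext CF f z, cof_ext CF g z) (cof_ext_sim B le hB CF _ f g Hfg z)) t).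
    split; rewrite <- fmap_comp; reflexivity.
  - apply (proj1 (hpre _)).
Qed.

Lemma phi_hom :
  natural_biGSOS CF FM rho ->
  forall X Y (c : X -> B X) (d : Y -> B Y) (h : X -> Y) f f',
  coalg_hom c d h -> coalg_hom f f' (Sstar_map FM h) ->
  coalg_hom (phi CF FM rho c f) (phi CF FM rho d f') (Sstar_map FM h).
Proof.
  intros hnat X Y c d h f f' h_hom f_hom s.
  rewrite <- (undestrK S FM X s). destruct (destr FM X s) as [t | x]; simpl.
  - rewrite Sstar_map_iota. unfold phi. rewrite !destr_iota, <- fmap_comp.
    assert (E : fmap S (cof_ext CF f') (fmap S (Sstar_map FM h) t)
              = fmap S (Binf_map CF (Sstar_map FM h)) (fmap S (cof_ext CF f) t)).
    { rewrite <- !fmap_comp. f_equal. apply functional_extensionality. intro z.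
      symmetry. apply Binf_map_cof_ext, f_hom. }
    rewrite E, hnat, <- fmap_comp. f_equal.
    apply functional_extensionality. intro z. apply Sstar_map_mu.
  - rewrite Sstar_map_eta. unfold phi. rewrite !destr_eta, <- fmap_comp, <- h_hom, <- fmap_comp.
    f_equal. apply functional_extensionality. intro z. apply Sstar_map_eta.
Qed.

End Phi.

Theorem mainTheorem8
  (B : Functor) (le : forall X, B X -> B X -> Prop) (hB : DCPObot_ordered B le)
  (CF : CofreeComonad B) (S : Functor) (FM : FreeMonad S)
  (rho : forall X, S (Binf CF X) -> B (Sstar FM X))
  (hnat : natural_biGSOS CF FM rho) (hmono : monotone_biGSOS le CF FM rho) :
  (* c^sharp exists *)
  (forall X (c : X -> B X), exists cs, is_lfp (le (Sstar FM X)) (phi CF FM rho c) cs) /\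
  (* Sigma^* h is a homomorphism c^sharp -> d^sharp *)
  (forall X Y (c : X -> B X) (d : Y -> B Y) (h : X -> Y),
      coalg_hom c d h ->
      forall cs ds, is_lfp (le (Sstar FM X)) (phi CF FM rho c) cs ->
                    is_lfp (le (Sstar FM Y)) (phi CF FM rho d) ds ->
                    coalg_hom cs ds (Sstar_map FM h)) /\
  (* functor laws of the lifting (X,c) |-> (Sigma^* X, c^sharp), h |-> Sigma^* h *)
  (forall X (s : Sstar FM X), Sstar_map FM (fun x : X => x) s = s) /\
  (forall X Y Z (f : X -> Y) (g : Y -> Z) (s : Sstar FM X),
      Sstar_map FM (fun x => g (f x)) s = Sstar_map FM g (Sstar_map FM f s)).
Proof.
  destruct hB as [hord [hdcpo hcont]].
  split; [| split; [| split]].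
  - intros X c. apply is_lfp_exists; [apply hdcpo | apply phi_monotone; assumption].
  - intros X Y c d h h_hom cs ds Hcs Hds.
    exact (lfp_transfer _ _ _ _ _ _ (hdcpo _) (hdcpo _) _ _ (hcont _ _ (Sstar_map FM h))
             _ _ (phi_monotone _ _ _ _ _ _ hord hmono X c)
             (phi_monotone _ _ _ _ _ _ hord hmono Y d)
             (fun f f' => phi_hom _ _ _ _ _ hnat _ _ c d h f f' h_hom) _ _ Hcs Hds).
  - apply Sstar_map_id.
  - apply Sstar_map_comp.
Qed.
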